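(* Let $G=(V,E)$ be a finite, undirected, connected graph with $V=\{1,\dots,n\}$ and $n\ge 3$. Then there exists a symmetric real $n\times n$ matrix $A=(a_{ij})$ such that: (1) $A$ is positive definite; (2) $a_{ij}\neq 0$ for all $i,j$; (3) for every $i$, $|a_{ii}|<\sum_{j\neq i}|a_{ij}|$; (4) $A_G$ is positive definite; (5) $A_G$ is not strictly diagonally dominant.
   Context: For a symmetric $n\times n$ real matrix $A=(a_{ij})$, $A_G$ is defined by $(A_G)_{ij}=a_{ij}$ if $i=j$ or $(i,j)\in E$, and $(A_G)_{ij}=0$ otherwise. A matrix $M=(m_{ij})$ is strictly diagonally dominant if $|m_{ii}|>\sum_{j\neq i}|m_{ij}|$ for every $i$. *)

From HB Require Import structures.
From mathcomp Require Import all_boot all_order all_algebra.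
From mathcomp Require Import reals.
Set Implicit Arguments. Unset Strict Implicit. Unset Printing Implicit Defensive.
Import Order.TTheory GRing.Theory Num.Theory.
Local Open Scope ring_scope.

(* A finite simple undirected graph on vertex set 'I_n (= {1,...,n} shifted
   to {0,...,n-1}) is given by a symmetric irreflexive edge relation e. *)
Definition simple_graph (n : nat) (e : rel 'I_n) : Prop :=
  symmetric e /\ irreflexive e.

Definition connected_graph (n : nat) (e : rel 'I_n) : Prop :=
  forall i j : 'I_n, connect e i j.

(* A_G : keep diagonal entries and entries a_ij with (i,j) an edge. *)
Definition graph_part (R : nzRingType) (n : nat) (e : rel 'I_n)
  (A : 'M[R]_n) : 'M[R]_n :=
  \matrix_(i, j) (if (i == j) || e i j then A i j else 0).

Definition posdef (R : realFieldType) (n : nat) (A : 'M[R]_n) : Prop :=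
  A^T = A /\ forall x : 'cV[R]_n, x != 0 -> 0 < (x^T *m A *m x) 0 0.

Definition strictly_diag_dominant (R : realFieldType) (n : nat)
  (M : 'M[R]_n) : Prop :=
  forall i : 'I_n, \sum_(j < n | j != i) `|M i j| < `|M i i|.

From HB Require Import structures.
From mathcomp Require Import all_boot all_order all_algebra.
From mathcomp Require Import reals.
From mathcomp Require Import zify ring lra.

Set Implicit Arguments.
Unset Strict Implicit.
Unset Printing Implicit Defensive.

Import Order.TTheory GRing.Theory Num.Theory.

(* Pick positive weights s on the vertices, write nbr_i and far_i for the sums
   of s_j over the neighbours of i and over the non-neighbours j <> i, and take
   A = D + 2 s s^T with D_ii = s_i (2 far_i + nbr_i - s_i).  All entries of A
   are positive and row i misses dominance by s_i (nbr_i - s_i), which is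
   positive as soon as s_i < nbr_i.  Deleting the non-edges from 2 s s^T lowers
   the quadratic form by at most 2 sum_i s_i far_i x_i^2, which D absorbs, so
   A_G stays positive definite; A_G is not strictly dominant at a vertex p with
   2 far_p + s_p <= nbr_p.  On a connected graph with at least three vertices
   such weights exist around any vertex p of degree at least two. *)

Section GraphWeights.
Variables (n : nat) (e : rel 'I_n).
Hypotheses (n_ge3 : (3 <= n)%N) (e_sym : symmetric e) (e_irr : irreflexive e).
Hypothesis e_conn : connected_graph e.

Definition branching (i : 'I_n) := (1 < #|e i|)%N.

Lemma branchingP i :
  reflect (exists j k, [/\ e i j, e i k & j != k]) (branching i).
Proof. exact: card_gt1P. Qed.

Lemma exists_third (i j : 'I_n) : exists k, (k != i) && (k != j).
Proof.
have : (0 < #|~: [set i; j]|)%N.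
  have := cardsC [set i; j]; rewrite cards2 card_ord; case: (i != j); lia.
by case/card_gt0P=> k; rewrite in_setC in_set2 negb_or; exists k.
Qed.

Lemma exists_neighbor i : exists j, e i j.
Proof.
have [k /andP [ki _]] := exists_third i i.
have /connectP [[|j p] /= p_e k_last] := e_conn i k; first by rewrite k_last eqxx in ki.
by case/andP: p_e => eij _; exists j.
Qed.

Lemma edge_branching i j : e i j -> branching i || branching j.
Proof.
move=> eij; apply: contraT; rewrite negb_or => /andP [ni nj].
have nbr_eq x y z : ~~ branching x -> e x y -> e x z -> z = y.
  move=> nx exy exz; apply/eqP; apply: contraNT nx => zy.
  by apply/branchingP; exists z, y.
have ij_closed : closed e [set i; j].
  have eji : e j i by rewrite e_sym.
  apply: intro_closed; first exact: sym_connect_sym.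
  move=> x y exy /[!in_set2] /orP [] /eqP xE; subst x.
    by rewrite (nbr_eq i j y ni eij exy) eqxx orbT.
  by rewrite (nbr_eq j i y nj eji exy) eqxx.
have [k /andP [ki kj]] := exists_third i j.
have := closed_connect ij_closed (e_conn i k).
by rewrite !in_set2 eqxx (negbTE ki) (negbTE kj).
Qed.

Lemma exists_branching : exists p, branching p.
Proof.
have n_gt0 : (0 < n)%N by lia.
have [j eij] := exists_neighbor (Ordinal n_gt0).
by case/orP: (edge_branching eij) => ?; [exists (Ordinal n_gt0) | exists j].
Qed.

Lemma leq_nbr_sum (w : 'I_n -> nat) i j :
  e i j -> (w j <= \sum_(k | e i k) w k)%N.
Proof. by move=> eij; rewrite (bigD1 j) //= leq_addr. Qed.

Lemma leq_nbr_sum2 (w : 'I_n -> nat) i j k :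
  e i j -> e i k -> j != k -> (w j + w k <= \sum_(l | e i l) w l)%N.
Proof.
move=> eij eik jk; rewrite (bigD1 j) //= (bigD1 k) /=; last by rewrite eik eq_sym.
by rewrite addnA leq_addr.
Qed.

Section Weights.

Variable p : 'I_n.

(* Leaves get 2 and branching vertices 3, enough for s_i < nbr_i since the
   neighbour of a leaf branches; p and its neighbours are scaled by 6n so that
   nbr_p = 24n at least outweighs 2 far_p + s_p <= 6n + 18n. *)
Definition weight (j : 'I_n) : nat :=
  if j == p then 18 * n else if e p j then 12 * n
  else if branching j then 3 else 2.

Lemma weight_ge2 j : (2 <= weight j)%N.
Proof. by rewrite /weight; case: ifP => _; [|case: ifP => _; [|case: ifP]]; lia. Qed.

Lemma weight_p : weight p = (18 * n)%N.
Proof. by rewrite /weight eqxx. Qed.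

Lemma weight_nbr_p j : e p j -> weight j = (12 * n)%N.
Proof. by move=> epj; rewrite /weight epj; case: eqP => // jp; rewrite jp e_irr in epj. Qed.

Hypothesis p_branching : branching p.

Lemma weight_lt_nbr_sum i : (weight i < \sum_(j | e i j) weight j)%N.
Proof.
case: (eqVneq i p) => [-> | ip].
  have [j [k [epj epk jk]]] := branchingP p p_branching.
  have := leq_nbr_sum2 weight epj epk jk.
  by rewrite weight_p !weight_nbr_p //; lia.
case epi: (e p i).
  have eip : e i p by rewrite e_sym.
  have := leq_nbr_sum weight eip.
  by rewrite weight_p weight_nbr_p //; lia.
case bi: (branching i).
  have [j [k [eij eik jk]]] := branchingP i bi.
  have wi : weight i = 3 by rewrite /weight (negbTE ip) epi bi.
  have := leq_nbr_sum2 weight eij eik jk; have := weight_ge2 j; have := weight_ge2 k.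
  by rewrite wi; lia.
have [j eij] := exists_neighbor i.
have bj : branching j by have := edge_branching eij; rewrite bi.
have wi : weight i = 2 by rewrite /weight (negbTE ip) epi bi.
have wj : (3 <= weight j)%N.
  by rewrite /weight bj; case: ifP => _; [|case: ifP => _]; lia.
by have := leq_nbr_sum weight eij; rewrite wi; lia.
Qed.

Lemma far_sum_weight_le :
  (2 * \sum_(j | (j != p) && ~~ e p j) weight j + weight p
     <= \sum_(j | e p j) weight j)%N.
Proof.
have far_le : (\sum_(j | (j != p) && ~~ e p j) weight j <= 3 * n)%N.
  rewrite big_mkcond /=; apply: (@leq_trans (\sum_(j < n) 3)%N).
    apply: leq_sum => j _; case: ifP => // /andP [jp epj].
    by rewrite /weight (negbTE jp) (negbTE epj); case: ifP.
  by rewrite sum_nat_const card_ord mulnC.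
have [j [k [epj epk jk]]] := branchingP p p_branching.
have := leq_nbr_sum2 weight epj epk jk.
by rewrite weight_p !weight_nbr_p //; lia.
Qed.

End Weights.

Lemma exists_dominant_weights : exists (w : 'I_n -> nat) (p : 'I_n),
  [/\ forall i, (0 < w i)%N, forall i, (w i < \sum_(j | e i j) w j)%N
    & (2 * \sum_(j | (j != p) && ~~ e p j) w j + w p <= \sum_(j | e p j) w j)%N].
Proof.
have [p bp] := exists_branching.
exists (weight p), p; split; last exact: far_sum_weight_le.
  by move=> i; exact: leq_trans _ (weight_ge2 p i).
exact: weight_lt_nbr_sum.
Qed.

End GraphWeights.

Local Open Scope ring_scope.

Section QuadraticForms.
Variables (R : realFieldType) (n : nat).

Lemma mxquad_double_sum (M : 'M[R]_n) (x : 'cV[R]_n) :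
  (x^T *m M *m x) 0 0 = \sum_i \sum_j x i 0 * M i j * x j 0.
Proof.
rewrite mxE; under eq_bigr do rewrite mxE big_distrl /=.
rewrite exchange_big; apply: eq_bigr => i _; apply: eq_bigr => j _.
by rewrite !mxE.
Qed.

Lemma sum_weighted_sqr_gt0 (w : 'I_n -> R) (x : 'cV[R]_n) :
  (forall i, 0 < w i) -> x != 0 -> 0 < \sum_i w i * x i 0 ^+ 2.
Proof.
move=> w_gt0 x_neq0.
have [k xk_neq0] : exists k, x k 0 != 0.
  apply/existsP; apply: contraNT x_neq0; rewrite negb_exists => /forallP x0.
  by apply/eqP/matrixP => i j; rewrite (ord1 j) mxE; apply/eqP; rewrite -[_ == _]negbK.
rewrite (bigD1 k) //=; apply: ltr_pwDl.
  by rewrite mulr_gt0 // exprn_even_gt0.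
by apply: sumr_ge0 => i _; rewrite mulr_ge0 ?sqr_ge0 ?ltW.
Qed.

Lemma double_sum_le_sum_sqr (c : 'I_n -> 'I_n -> R) (y : 'I_n -> R) :
  (forall i j, c i j = c j i) -> (forall i j, 0 <= c i j) ->
  \sum_i \sum_j c i j * (y i * y j) <= \sum_i (\sum_j c i j) * y i ^+ 2.
Proof.
move=> c_sym c_ge0.
have swap : \sum_i \sum_j c i j * y j ^+ 2 = \sum_i (\sum_j c i j) * y i ^+ 2.
  rewrite exchange_big; apply: eq_bigr => i _; rewrite mulr_suml.
  by apply: eq_bigr => j _; rewrite c_sym.
have : 0 <= \sum_i \sum_j c i j * (y i - y j) ^+ 2.
  by do 2!apply: sumr_ge0 => ? _; rewrite mulr_ge0 ?sqr_ge0.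
have -> : \sum_i \sum_j c i j * (y i - y j) ^+ 2 =
    \sum_i \sum_j c i j * y i ^+ 2 + \sum_i \sum_j c i j * y j ^+ 2
    - 2 * \sum_i \sum_j c i j * (y i * y j).
  rewrite mulr_sumr -big_split -sumrB; apply: eq_bigr => i _.
  rewrite mulr_sumr -big_split -sumrB; apply: eq_bigr => j _ /=; ring.
rewrite swap; under eq_bigr do rewrite -mulr_suml; lra.
Qed.

Lemma quad_diag_plus_outer (d s y : 'I_n -> R) (c : 'I_n -> 'I_n -> R) :
  \sum_i \sum_j y i * ((i == j)%:R * d i + 2 * s i * s j - 2 * c i j) * y j =
  \sum_i d i * y i ^+ 2 + 2 * (\sum_i s i * y i) ^+ 2
    - 2 * \sum_i \sum_j c i j * (y i * y j).
Proof.
have diagE i : \sum_j (i == j)%:R * (d i * (y i * y j)) = d i * y i ^+ 2.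
  rewrite (bigD1 i) //= eqxx mul1r big1 ?addr0 => [|j ji]; first by rewrite expr2.
  by rewrite eq_sym (negbTE ji) mul0r.
have sqrE : (\sum_i s i * y i) ^+ 2 = \sum_i \sum_j s i * y i * (s j * y j).
  by rewrite expr2 mulr_suml; apply: eq_bigr => i _; rewrite mulr_sumr.
rewrite sqrE !mulr_sumr -big_split -sumrB; apply: eq_bigr => i _ /=.
rewrite -diagE !mulr_sumr -big_split -sumrB /=.
by apply: eq_bigr => j _; ring.
Qed.

Definition diag_plus_outer (d s : 'I_n -> R) : 'M[R]_n :=
  \matrix_(i, j) ((i == j)%:R * d i + 2 * s i * s j).

(* Deleting the entries 2 s_i s_j outside [f] costs at most 2 s_i (sum of the
   deleted s_j) on the diagonal, by [double_sum_le_sum_sqr]; the rank-one part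
   2 s s^T is positive semidefinite. *)
Lemma posdef_graph_part_diag_plus_outer (f : rel 'I_n) (d s : 'I_n -> R) :
  symmetric f -> (forall i, 0 <= s i) ->
  (forall i, 2 * s i * \sum_(j | ~~ ((i == j) || f i j)) s j < d i) ->
  posdef (graph_part f (diag_plus_outer d s)).
Proof.
move=> f_sym s_ge0 d_gt.
pose c i j := (~~ ((i == j) || f i j))%:R * (s i * s j).
have c_sym i j : c i j = c j i by rewrite /c eq_sym f_sym [s j * _]mulrC.
have c_ge0 i j : 0 <= c i j by rewrite mulr_ge0 ?ler0n ?mulr_ge0.
have entryE i j : graph_part f (diag_plus_outer d s) i j
    = (i == j)%:R * d i + 2 * s i * s j - 2 * c i j.
  rewrite /graph_part !mxE /c; case: eqVneq => /= [_|_]; first ring.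
  by case: (f i j) => /=; ring.
have row_c i : \sum_j c i j = s i * \sum_(j | ~~ ((i == j) || f i j)) s j.
  rewrite mulr_sumr [RHS]big_mkcond; apply: eq_bigr => j _.
  by rewrite /c; case: ifP; rewrite ?mul1r ?mul0r ?mulr0.
split.
  apply/matrixP => i j; rewrite mxE !entryE eq_sym c_sym.
  by case: eqP => [->|_] /=; ring.
move=> x x_neq0; rewrite mxquad_double_sum.
under eq_bigr do under eq_bigr do rewrite entryE.
rewrite quad_diag_plus_outer.
have w_gt0 i : 0 < d i - 2 * s i * \sum_(j | ~~ ((i == j) || f i j)) s j.
  by rewrite subr_gt0.
have := sum_weighted_sqr_gt0 w_gt0 x_neq0.
have -> : \sum_i (d i - 2 * s i * \sum_(j | ~~ ((i == j) || f i j)) s j) * x i 0 ^+ 2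
    = \sum_i d i * x i 0 ^+ 2 - 2 * \sum_i (\sum_j c i j) * x i 0 ^+ 2.
  by rewrite mulr_sumr -sumrB; apply: eq_bigr => i _; rewrite row_c; ring.
have := double_sum_le_sum_sqr (fun i => x i 0) c_sym c_ge0.
have := sqr_ge0 (\sum_i s i * x i 0); lra.
Qed.

End QuadraticForms.

Lemma graph_part_relT (R : nzRingType) n (A : 'M[R]_n) :
  graph_part (fun _ _ => true) A = A.
Proof. by apply/matrixP => i j; rewrite mxE orbT. Qed.

Section WeightedMatrix.
Variables (R : realFieldType) (n : nat) (e : rel 'I_n) (s : 'I_n -> R).
Hypotheses (e_sym : symmetric e) (e_irr : irreflexive e).

Definition nbr_sum i := \sum_(j | e i j) s j.
Definition far_sum i := \sum_(j | (j != i) && ~~ e i j) s j.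

Hypotheses (s_gt0 : forall i, 0 < s i) (s_lt_nbr : forall i, s i < nbr_sum i).

Definition weighted_matrix : 'M[R]_n :=
  diag_plus_outer (fun i => s i * (2 * far_sum i + nbr_sum i - s i)) s.

Lemma sum_neq_nbr_far i : \sum_(j | j != i) s j = nbr_sum i + far_sum i.
Proof.
rewrite (bigID (e i)) /=; congr (_ + _); apply: eq_bigl => j.
by case: eqVneq => [->|]; rewrite ?e_irr ?andbT.
Qed.

Lemma far_sum_ge0 i : 0 <= far_sum i.
Proof. by apply: sumr_ge0 => j _; apply: ltW. Qed.

Lemma weighted_matrixE i j :
  weighted_matrix i j
    = (i == j)%:R * (s i * (2 * far_sum i + nbr_sum i - s i)) + 2 * s i * s j.
Proof. by rewrite mxE. Qed.

Lemma weighted_diag_gt0 i : 0 < s i * (2 * far_sum i + nbr_sum i - s i).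
Proof. by rewrite mulr_gt0 //; have := s_lt_nbr i; have := far_sum_ge0 i; lra. Qed.

Lemma weighted_matrix_gt0 i j : 0 < weighted_matrix i j.
Proof.
rewrite weighted_matrixE ltr_wpDl ?mulr_gt0 //.
by rewrite mulr_ge0 ?ler0n ?ltW ?weighted_diag_gt0.
Qed.

Lemma posdef_weighted_matrix : posdef weighted_matrix.
Proof.
rewrite -(graph_part_relT weighted_matrix).
apply: posdef_graph_part_diag_plus_outer => // i; first exact: ltW.
by rewrite big_pred0 ?mulr0 ?weighted_diag_gt0 // => j; rewrite orbT.
Qed.

Lemma posdef_graph_part_weighted_matrix : posdef (graph_part e weighted_matrix).
Proof.
apply: posdef_graph_part_diag_plus_outer => // i; first exact: ltW.
have -> : \sum_(j | ~~ ((i == j) || e i j)) s j = far_sum i.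
  by apply: eq_bigl => j; rewrite negb_or eq_sym.
by have := s_gt0 i; have := s_lt_nbr i; nra.
Qed.

Lemma weighted_matrix_diag_lt_row_sum i :
  `|weighted_matrix i i| < \sum_(j | j != i) `|weighted_matrix i j|.
Proof.
rewrite gtr0_norm ?weighted_matrix_gt0 //.
under eq_bigr => j ji do
  rewrite gtr0_norm ?weighted_matrix_gt0 // weighted_matrixE eq_sym (negbTE ji) mul0r add0r.
rewrite -mulr_sumr sum_neq_nbr_far weighted_matrixE eqxx mul1r.
by have := s_gt0 i; have := s_lt_nbr i; nra.
Qed.

Lemma graph_part_weighted_matrix_not_sdd p :
  2 * far_sum p + s p <= nbr_sum p ->
  ~ strictly_diag_dominant (graph_part e weighted_matrix).
Proof.
move=> far_le /(_ p); apply/negP; rewrite -leNgt.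
have -> : \sum_(j | j != p) `|graph_part e weighted_matrix p j| = 2 * s p * nbr_sum p.
  rewrite (bigID (e p)) /= [X in _ + X]big1 => [|j /andP [jp /negbTE epj]]; last first.
    by rewrite mxE eq_sym (negbTE jp) epj normr0.
  rewrite addr0 mulr_sumr; apply: eq_big => [j|j /andP [_ epj]].
    by case: eqVneq => [->|]; rewrite ?e_irr ?andbT.
  rewrite mxE epj orbT gtr0_norm ?weighted_matrix_gt0 // weighted_matrixE.
  by case: eqVneq => [jp|_]; [rewrite jp e_irr in epj | rewrite mul0r add0r].
rewrite mxE eqxx gtr0_norm ?weighted_matrix_gt0 // weighted_matrixE eqxx mul1r.
by have := s_gt0 p; nra.
Qed.

End WeightedMatrix.

Theorem proposition1 (R : realType) (n : nat) (e : rel 'I_n) :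
  (3 <= n)%N -> simple_graph e -> connected_graph e ->
  exists A : 'M[R]_n,
    [/\ posdef A,
        (forall i j, A i j != 0),
        (forall i, `|A i i| < \sum_(j < n | j != i) `|A i j|),
        posdef (graph_part e A)
      & ~ strictly_diag_dominant (graph_part e A)].
Proof.
move=> n_ge3 [e_sym e_irr] e_conn.
have [w [p [w_gt0 w_lt_nbr w_far_le]]] := exists_dominant_weights n_ge3 e_sym e_irr e_conn.
pose s i : R := (w i)%:R.
have s_gt0 i : 0 < s i by rewrite ltr0n w_gt0.
have s_lt_nbr i : s i < nbr_sum e s i by rewrite /nbr_sum -natr_sum ltr_nat.
exists (weighted_matrix e s); split.
- exact: posdef_weighted_matrix.
- by move=> i j; rewrite gt_eqF ?weighted_matrix_gt0.
- exact: weighted_matrix_diag_lt_row_sum.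
- exact: posdef_graph_part_weighted_matrix.
- apply: (graph_part_weighted_matrix_not_sdd e_irr s_gt0 s_lt_nbr (p := p)).
  by rewrite /far_sum /nbr_sum -!natr_sum -natrM -natrD ler_nat.
Qed.
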